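(* For the system of $N$ symplectic point vortices in $\mathbb R^{2m}$ (the Hamiltonian system on $(\mathbb R^{2m})^N$ with Poisson bracket $\{f,g\}=\sum_{j=1}^N\frac1{\Gamma_j}\sum_{\alpha=1}^m\big(\frac{\partial f}{\partial x_{j,\alpha}}\frac{\partial g}{\partial y_{j,\alpha}}-\frac{\partial f}{\partial y_{j,\alpha}}\frac{\partial g}{\partial x_{j,\alpha}}\big)$ and Hamiltonian $\mathcal H=2C(2m)\sum_{j<k}\Gamma_j\Gamma_k|\tilde z_j-\tilde z_k|^{2-2m}$ for $m>1$, resp. $\mathcal H=-\frac1{4\pi}\sum_{j<k}\Gamma_j\Gamma_k\ln|\tilde z_j-\tilde z_k|^2$ for $m=1$), the functions $$\mathcal H,\qquad F^+_{\alpha\alpha}=\sum_{j=1}^N\Gamma_j(x_{j,\alpha}^2+y_{j,\alpha}^2),\qquad Q_\alpha^2+P_\alpha^2\quad(1\le\alpha\le m),$$ where $Q_\alpha=\sum_{j}\Gamma_jx_{j,\alpha}$ and $P_\alpha=\sum_j\Gamma_jy_{j,\alpha}$, provide $2m+1$ first integrals in involution on $(\mathbb R^{2m})^N$.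
   Context: $\tilde z_j=(x_{j,1},\dots,x_{j,m},y_{j,1},\dots,y_{j,m})\in\mathbb R^{2m}$ is the position of the $j$-th vortex, $\Gamma_j\neq0$ are real vortex strengths, $|\cdot|$ is the Euclidean norm, and $C(2m)$ is the constant with $\Delta(C(2m)|\tilde z|^{2-2m})=\delta$ in $\mathbb R^{2m}$. The equations of motion are $\Gamma_j\dot x_{j,\alpha}=\partial\mathcal H/\partial y_{j,\alpha}$, $\Gamma_j\dot y_{j,\alpha}=-\partial\mathcal H/\partial x_{j,\alpha}$. ''In involution'' means pairwise Poisson commuting. *)

From HB Require Import structures.
From mathcomp Require Import all_boot all_order all_algebra.
From mathcomp Require Import all_classical all_reals all_analysis.
Set Implicit Arguments. Unset Strict Implicit. Unset Printing Implicit Defensive.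
Import Order.TTheory GRing.Theory Num.Theory.
Local Open Scope ring_scope.

Section Vortex.
Variables (R : realType) (N m : nat).

(* A point of (R^{2m})^N : the coordinates x_{j,alpha} and y_{j,alpha},
   j : 'I_N, alpha : 'I_m (indices are 0-based). *)
Definition phase := (('I_N -> 'I_m -> R) * ('I_N -> 'I_m -> R))%type.

Definition upd (X : 'I_N -> 'I_m -> R) (j : 'I_N) (a : 'I_m) (t : R) :=
  fun k b => if (k == j) && (b == a) then t else X k b.

Definition dX (f : phase -> R) (p : phase) (j : 'I_N) (a : 'I_m) : R :=
  derive1 (fun t => f (upd p.1 j a t, p.2)) (p.1 j a).
Definition dY (f : phase -> R) (p : phase) (j : 'I_N) (a : 'I_m) : R :=
  derive1 (fun t => f (p.1, upd p.2 j a t)) (p.2 j a).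

Definition has_partials (f : phase -> R) (p : phase) : Prop :=
  forall (j : 'I_N) (a : 'I_m),
    derivable (fun t => f (upd p.1 j a t, p.2)) (p.1 j a) 1 /\
    derivable (fun t => f (p.1, upd p.2 j a t)) (p.2 j a) 1.

Definition poisson (Gam : 'I_N -> R) (f g : phase -> R) (p : phase) : R :=
  \sum_(j < N) (Gam j)^-1 *
    \sum_(a < m) (dX f p j a * dY g p j a - dY f p j a * dX g p j a).

Definition dist2 (p : phase) (j k : 'I_N) : R :=
  \sum_(a < m) ((p.1 j a - p.1 k a) ^+ 2 + (p.2 j a - p.2 k a) ^+ 2).

(* collision-free configurations (where H is defined) *)
Definition no_collision (p : phase) : Prop :=
  forall j k : 'I_N, j != k -> dist2 p j k != 0.

(* C(2m), m >= 2: the constant with Delta (C(2m) |z|^{2-2m}) = delta in R^{2m},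
   i.e. C(n) = -1/((n-2) |S^{n-1}|) with |S^{2m-1}| = 2 pi^m/(m-1)!,
   giving C(2m) = -(m-2)!/(4 pi^m). *)
Definition C2m : R := - ((m - 2)`!)%:R / (4 * pi ^+ m).

(* The Hamiltonian (|z|^{2-2m} = (|z|^2)^-(m-1)). *)
Definition Ham (Gam : 'I_N -> R) (p : phase) : R :=
  if m == 1%N then
    - (4 * pi)^-1 * \sum_(j < N) \sum_(k < N | (j < k)%N)
        Gam j * Gam k * ln (dist2 p j k)
  else
    2 * C2m * \sum_(j < N) \sum_(k < N | (j < k)%N)
        Gam j * Gam k * (dist2 p j k) ^- (m - 1).

Definition Fpl (Gam : 'I_N -> R) (a : 'I_m) (p : phase) : R :=
  \sum_(j < N) Gam j * (p.1 j a ^+ 2 + p.2 j a ^+ 2).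

Definition Qc (Gam : 'I_N -> R) (a : 'I_m) (p : phase) : R :=
  \sum_(j < N) Gam j * p.1 j a.
Definition Pc (Gam : 'I_N -> R) (a : 'I_m) (p : phase) : R :=
  \sum_(j < N) Gam j * p.2 j a.

(* The family of 2m+1 functions: None |-> H, Some (inl a) |-> F^+_{aa},
   Some (inr a) |-> Q_a^2 + P_a^2. *)
Definition integrals (Gam : 'I_N -> R) (i : option ('I_m + 'I_m)) : phase -> R :=
  match i with
  | None => Ham Gam
  | Some (inl a) => Fpl Gam a
  | Some (inr a) => fun p => Qc Gam a p ^+ 2 + Pc Gam a p ^+ 2
  end.

End Vortex.

From HB Require Import structures.
From mathcomp Require Import all_boot all_order all_algebra.
From mathcomp Require Import all_classical all_reals all_analysis.
From mathcomp Require Import ring.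
Import Order.TTheory GRing.Theory Num.Theory.
Local Open Scope ring_scope.
Set Implicit Arguments. Unset Strict Implicit.

(** All the functions are invariant under the exchange [x <-> y] of every
    coordinate, so each [y]-derivative is an [x]-derivative of the exchanged
    configuration.  Because the gradients of [F^+_bb] and [Q_b^2 + P_b^2] carry
    a factor [Gam_j] that cancels the [1/Gam_j] of the bracket,
      [{f, F^+_bb} = 2 sum_j (d_{x_jb} f * y_jb - d_{y_jb} f * x_jb)] and
      [{f, Q_b^2 + P_b^2} = 2 sum_j (P_b * d_{x_jb} f - Q_b * d_{y_jb} f)]:
    these are the generators of the rotation of all the planes [(x_jb, y_jb)]
    and of a translation in those planes.  The Hamiltonian is a sum of pair
    potentials [phi (|z_j - z_k|^2)] (with [phi = ln] for [m = 1] and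
    [phi x = x^-(m-1)] otherwise), hence is killed by both; the remaining
    brackets among the [F^+] and [Q^2 + P^2] are direct computations. *)

Section RealDerivatives.
Variable R : realType.
Implicit Types (f g : R -> R) (x df dg : R).

Lemma is_derive1_cst (c : R) x : is_derive x 1 (fun _ => c) 0.
Proof. exact: is_derive_cst. Qed.

Lemma is_derive1D f g x df dg : is_derive x 1 f df -> is_derive x 1 g dg ->
  is_derive x 1 (fun t => f t + g t) (df + dg).
Proof. by move=> Df Dg; have := is_deriveD Df Dg. Qed.

Lemma is_derive1B f g x df dg : is_derive x 1 f df -> is_derive x 1 g dg ->
  is_derive x 1 (fun t => f t - g t) (df - dg).
Proof. by move=> Df Dg; have := is_deriveB Df Dg. Qed.

Lemma is_derive1M f g x df dg : is_derive x 1 f df -> is_derive x 1 g dg ->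
  is_derive x 1 (fun t => f t * g t) (f x * dg + g x * df).
Proof. by move=> Df Dg; have := is_deriveM Df Dg. Qed.

Lemma is_derive1Ml (c : R) f x df : is_derive x 1 f df ->
  is_derive x 1 (fun t => c * f t) (c * df).
Proof.
move=> Df; apply: is_derive_eq (is_derive1M (is_derive1_cst c x) Df) _.
by rewrite mulr0 addr0.
Qed.

Lemma is_derive1X n f x df : is_derive x 1 f df ->
  is_derive x 1 (fun t => f t ^+ n) (n%:R * f x ^+ n.-1 * df).
Proof.
move=> Df; elim: n => [|n IHn].
  by apply: is_derive_eq (is_derive1_cst 1 x) _; rewrite !mul0r.
have -> : (fun t => f t ^+ n.+1) = (fun t => f t * f t ^+ n).
  by apply/funext => t; rewrite exprS.
apply: is_derive_eq (is_derive1M Df IHn) _.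
case: n {IHn} => [|n] /=; first by rewrite !expr0; ring.
rewrite !exprS -[n.+2%:R]natr1 -[n.+1%:R]natr1; ring.
Qed.

Lemma is_derive1V f x df : f x != 0 -> is_derive x 1 f df ->
  is_derive x 1 (fun t => (f t)^-1) (- (f x) ^- 2 * df).
Proof. by move=> fx0 Df; have := is_deriveV fx0 Df. Qed.

Lemma is_derive1_comp_fun (phi : R -> R) dphi f x df :
  is_derive (f x) 1 phi dphi -> is_derive x 1 f df ->
  is_derive x 1 (fun t => phi (f t)) (dphi * df).
Proof. by move=> Dphi Df; have := is_derive1_comp Dphi Df. Qed.

Lemma is_derive1_sum n (h : 'I_n -> R -> R) (dh : 'I_n -> R) x :
  (forall i, is_derive x 1 (h i) (dh i)) ->
  is_derive x 1 (fun t => \sum_(i < n) h i t) (\sum_(i < n) dh i).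
Proof. by move=> Dh; have := is_derive_sum Dh; rewrite fct_sumE. Qed.

Lemma is_derive1_sum_cond n (P : pred 'I_n) (h : 'I_n -> R -> R)
    (dh : 'I_n -> R) x :
  (forall i, P i -> is_derive x 1 (h i) (dh i)) ->
  is_derive x 1 (fun t => \sum_(i < n | P i) h i t) (\sum_(i < n | P i) dh i).
Proof.
move=> Dh; rewrite big_mkcond.
have -> : (fun t => \sum_(i < n | P i) h i t) =
          (fun t => \sum_(i < n) (if P i then h i t else 0)).
  by apply/funext => t; rewrite big_mkcond.
by apply: is_derive1_sum => i; case: ifP => [/Dh//|_]; exact: is_derive1_cst.
Qed.

End RealDerivatives.

Section KroneckerSums.
Variables (R : comPzRingType) (n : nat).
Implicit Types (g : 'I_n -> R) (c : 'I_n).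

Lemma sumr_delta g c : \sum_(k < n) g k * (k == c)%:R = g c.
Proof.
rewrite (bigD1 c) //= eqxx mulr1 big1 ?addr0 // => k /negPf ->.
by rewrite mulr0.
Qed.

Lemma sumr_deltaC g c : \sum_(k < n) g k * (c == k)%:R = g c.
Proof. by under eq_bigr do rewrite eq_sym; exact: sumr_delta. Qed.

Lemma sumr_delta_and g c (b : bool) :
  \sum_(k < n) g k * ((k == c) && b)%:R = g c * b%:R.
Proof.
rewrite -sumr_delta mulr_suml; apply: eq_bigr => k _.
by rewrite -mulrA -natrM mulnb.
Qed.

Lemma sumr_delta_diff g j k :
  \sum_(i < n) g i * ((j == i)%:R - (k == i)%:R) = g j - g k.
Proof.
under eq_bigr do rewrite mulrBr.
by rewrite sumrB !sumr_deltaC.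
Qed.

End KroneckerSums.

Section Coordinates.
Variables (R : realType) (N m : nat).
Local Notation coords := ('I_N -> 'I_m -> R).
Local Notation phase := (phase R N m).

Definition swap_xy (p : phase) : phase := (p.2, p.1).

Lemma upd_self (X : coords) i a : upd X i a (X i a) = X.
Proof.
apply/funext => k; apply/funext => b; rewrite /upd.
by case: andP => // [[/eqP -> /eqP ->]].
Qed.

Lemma is_derive_upd (X : coords) i a k b :
  is_derive (X i a) 1 (fun t => upd X i a t k b) ((k == i) && (b == a))%:R.
Proof.
rewrite /upd; case: ((k == i) && (b == a)).
  exact: is_derive_id.
exact: is_derive1_cst.
Qed.

Lemma dX_is_derive (f : phase -> R) (X Y : coords) i a d :
  is_derive (X i a) 1 (fun t => f (upd X i a t, Y)) d -> dX f (X, Y) i a = d.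
Proof. by move=> Df; rewrite /dX derive1E; exact: derive_val. Qed.

Lemma dY_swap_invariant (f : phase -> R) (X Y : coords) i a :
  (forall q, f (swap_xy q) = f q) -> dY f (X, Y) i a = dX f (Y, X) i a.
Proof.
move=> fsw; rewrite /dY /dX /=; congr derive1; apply/funext => t.
exact: (fsw (upd Y i a t, X)).
Qed.

Lemma has_partials_swap_invariant (f : phase -> R) (X Y : coords)
    (dfX dfY : 'I_N -> 'I_m -> R) :
  (forall q, f (swap_xy q) = f q) ->
  (forall i a, is_derive (X i a) 1 (fun t => f (upd X i a t, Y)) (dfX i a)) ->
  (forall i a, is_derive (Y i a) 1 (fun t => f (upd Y i a t, X)) (dfY i a)) ->
  has_partials f (X, Y).
Proof.
move=> fsw DX DY i a; split; first by case: (DX i a).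
have -> : (fun t => f (X, upd Y i a t)) = (fun t => f (upd Y i a t, X)).
  by apply/funext => t; exact: (fsw (upd Y i a t, X)).
by case: (DY i a).
Qed.

Lemma dist2_ge0 (p : phase) j k : 0 <= dist2 p j k.
Proof. by apply: sumr_ge0 => b _; apply: addr_ge0; exact: sqr_ge0. Qed.

Lemma dist2_swap (p : phase) j k : dist2 (swap_xy p) j k = dist2 p j k.
Proof. by apply: eq_bigr => b _; rewrite addrC. Qed.

Lemma no_collision_swap (p : phase) :
  no_collision p -> no_collision (swap_xy p).
Proof. by move=> nc j k jk; rewrite dist2_swap; exact: nc. Qed.

Lemma is_derive_dist2 (X Y : coords) i a j k :
  is_derive (X i a) 1 (fun t => dist2 (upd X i a t, Y) j k)
    (2 * (X j a - X k a) * ((j == i)%:R - (k == i)%:R)).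
Proof.
have Dterm b : is_derive (X i a) 1
    (fun t => (upd X i a t j b - upd X i a t k b) ^+ 2 + (Y j b - Y k b) ^+ 2)
    (2 * (X j b - X k b) * ((j == i)%:R - (k == i)%:R) * (b == a)%:R).
  apply: is_derive_eq.
    apply: is_derive1D (is_derive1_cst _ _).
    apply: is_derive1X.
    exact: is_derive1B (is_derive_upd X i a j b) (is_derive_upd X i a k b).
  by rewrite /= upd_self expr1; case: (b == a); rewrite ?andbT ?andbF /=; ring.
by apply: is_derive_eq (is_derive1_sum Dterm) _; rewrite sumr_delta.
Qed.

Variable Gam : 'I_N -> R.

Lemma poissonC (f g : phase -> R) p : poisson Gam f g p = - poisson Gam g f p.
Proof.
rewrite /poisson -sumrN; apply: eq_bigr => j _; rewrite -mulrN -sumrN.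
by congr (_ * _); apply: eq_bigr => a _; ring.
Qed.

Lemma poissonxx (f : phase -> R) p : poisson Gam f f p = 0.
Proof.
rewrite /poisson big1 // => j _.
by rewrite big1 ?mulr0 // => a _; rewrite mulrC subrr.
Qed.

End Coordinates.

Section PairGradient.
Variables (R : comPzRingType) (N : nat) (K : R) (c : 'I_N -> 'I_N -> R).

(* The [Z_i]-derivative of [K * sum_(j < k) phi_jk (|z_j - z_k|^2)], where
   [c j k] is [phi_jk'] evaluated at [|z_j - z_k|^2]. *)
Definition pair_grad (Z : 'I_N -> R) (i : 'I_N) : R :=
  K * \sum_(j < N) \sum_(k < N | (j < k)%N)
    c j k * (2 * (Z j - Z k) * ((j == i)%:R - (k == i)%:R)).

Lemma pair_grad_sum Z : \sum_(i < N) pair_grad Z i = 0.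
Proof.
rewrite -mulr_sumr exchange_big big1 ?mulr0 // => j _.
rewrite exchange_big big1 // => k _.
under eq_bigr do rewrite mulrA.
by rewrite sumr_delta_diff subrr.
Qed.

Lemma pair_grad_rot Z W :
  \sum_(i < N) (pair_grad Z i * W i - pair_grad W i * Z i) = 0.
Proof.
rewrite (eq_bigr (fun i => K * \sum_(j < N) \sum_(k < N | (j < k)%N)
   c j k * 2 * ((Z j - Z k) * W i - (W j - W k) * Z i) *
   ((j == i)%:R - (k == i)%:R))); last first.
  move=> i _; rewrite -mulrA -[_ * Z i]mulrA -mulrBr; congr (K * _).
  rewrite !mulr_suml -sumrB; apply: eq_bigr => j _.
  by rewrite !mulr_suml -sumrB; apply: eq_bigr => k _; ring.
rewrite -mulr_sumr exchange_big big1 ?mulr0 // => j _.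
rewrite exchange_big big1 // => k _.
by rewrite sumr_delta_diff; ring.
Qed.

End PairGradient.

Section PairPotential.
Variables (R : realType) (N m : nat) (Gam : 'I_N -> R).
Variables (K : R) (phi phi' : R -> R).
Hypothesis phi_derive : forall x : R, 0 < x -> is_derive x 1 phi (phi' x).
Local Notation coords := ('I_N -> 'I_m -> R).
Local Notation phase := (phase R N m).

Definition pair_potential (p : phase) : R :=
  K * \sum_(j < N) \sum_(k < N | (j < k)%N) Gam j * Gam k * phi (dist2 p j k).

Definition pair_weight (X Y : coords) (j k : 'I_N) : R :=
  Gam j * Gam k * phi' (dist2 (X, Y) j k).

Lemma pair_weight_swap X Y : pair_weight Y X = pair_weight X Y.
Proof.
by apply/funext => j; apply/funext => k; rewrite /pair_weight (dist2_swap (X, Y)).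
Qed.

Lemma pair_potential_swap p : pair_potential (swap_xy p) = pair_potential p.
Proof.
congr (_ * _); apply: eq_bigr => j _; apply: eq_bigr => k _.
by rewrite dist2_swap.
Qed.

Lemma is_derive_pair_potential (X Y : coords) i a : no_collision (X, Y) ->
  is_derive (X i a) 1 (fun t => pair_potential (upd X i a t, Y))
    (pair_grad K (pair_weight X Y) (fun j => X j a) i).
Proof.
move=> nc; apply: is_derive1Ml; apply: is_derive1_sum => j.
apply: is_derive1_sum_cond => k jk.
have dist_gt0 : 0 < dist2 (X, Y) j k.
  rewrite lt0r dist2_ge0 andbT; apply: nc.
  by apply: contraTneq jk => ->; rewrite ltnn.
apply: is_derive_eq.
  apply: is_derive1Ml; apply: is_derive1_comp_fun (is_derive_dist2 _ _ _ _ _ _).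
  by rewrite upd_self; exact: phi_derive dist_gt0.
by rewrite /pair_weight mulrA.
Qed.

End PairPotential.

Section FirstIntegrals.
Variables (R : realType) (N m : nat) (Gam : 'I_N -> R).
Hypothesis Gam_neq0 : forall j, Gam j != 0.
Local Notation coords := ('I_N -> 'I_m -> R).
Local Notation phase := (phase R N m).

Definition QP2 (b : 'I_m) (p : phase) : R := Qc Gam b p ^+ 2 + Pc Gam b p ^+ 2.

Lemma Fpl_swap (b : 'I_m) (p : phase) : Fpl Gam b (swap_xy p) = Fpl Gam b p.
Proof. by apply: eq_bigr => j _; rewrite addrC. Qed.

Lemma QP2_swap b (p : phase) : QP2 b (swap_xy p) = QP2 b p.
Proof. by rewrite /QP2 addrC. Qed.

Lemma is_derive_Fpl b (X Y : coords) i a :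
  is_derive (X i a) 1 (fun t => Fpl Gam b (upd X i a t, Y))
    (2 * Gam i * X i a * (b == a)%:R).
Proof.
have Dterm j : is_derive (X i a) 1
    (fun t => Gam j * (upd X i a t j b ^+ 2 + Y j b ^+ 2))
    (Gam j * (2 * X j b) * ((j == i) && (b == a))%:R).
  apply: is_derive_eq.
    apply: is_derive1Ml; apply: is_derive1D (is_derive1_cst _ _).
    exact: is_derive1X (is_derive_upd X i a j b).
  by rewrite /= upd_self expr1; ring.
apply: is_derive_eq (is_derive1_sum Dterm) _.
by rewrite sumr_delta_and; case: eqP => [->|_] /=; ring.
Qed.

Lemma is_derive_QP2 b (X Y : coords) i a :
  is_derive (X i a) 1 (fun t => QP2 b (upd X i a t, Y))
    (2 * Qc Gam b (X, Y) * Gam i * (b == a)%:R).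
Proof.
have DQ : is_derive (X i a) 1 (fun t => \sum_(j < N) Gam j * upd X i a t j b)
    (\sum_(j < N) Gam j * ((j == i) && (b == a))%:R).
  by apply: is_derive1_sum => j; exact: is_derive1Ml (is_derive_upd X i a j b).
rewrite /QP2 /Qc /Pc /=.
apply: is_derive_eq (is_derive1D (is_derive1X 2 DQ) (is_derive1_cst _ _)) _.
rewrite /= upd_self sumr_delta_and.
by case: eqP => [->|_] /=; ring.
Qed.

Lemma dX_Fpl b (X Y : coords) i a :
  dX (Fpl Gam b) (X, Y) i a = 2 * Gam i * X i a * (b == a)%:R.
Proof. exact/dX_is_derive/is_derive_Fpl. Qed.

Lemma dY_Fpl b (X Y : coords) i a :
  dY (Fpl Gam b) (X, Y) i a = 2 * Gam i * Y i a * (b == a)%:R.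
Proof. by rewrite dY_swap_invariant ?dX_Fpl //; exact: Fpl_swap. Qed.

Lemma dX_QP2 b (X Y : coords) i a :
  dX (QP2 b) (X, Y) i a = 2 * Qc Gam b (X, Y) * Gam i * (b == a)%:R.
Proof. exact/dX_is_derive/is_derive_QP2. Qed.

Lemma dY_QP2 b (X Y : coords) i a :
  dY (QP2 b) (X, Y) i a = 2 * Pc Gam b (X, Y) * Gam i * (b == a)%:R.
Proof. by rewrite dY_swap_invariant ?dX_QP2 //; exact: QP2_swap. Qed.

Lemma poisson_Fpl_r (f : phase -> R) b (X Y : coords) :
  poisson Gam f (Fpl Gam b) (X, Y) =
  2 * \sum_(j < N) (dX f (X, Y) j b * Y j b - dY f (X, Y) j b * X j b).
Proof.
rewrite /poisson mulr_sumr; apply: eq_bigr => j _.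
under eq_bigr do rewrite dX_Fpl dY_Fpl.
rewrite (eq_bigr (fun c => 2 * Gam j * (dX f (X, Y) j c * Y j c -
  dY f (X, Y) j c * X j c) * (b == c)%:R)); last by move=> c _; ring.
by rewrite sumr_deltaC; field; exact: Gam_neq0.
Qed.

Lemma poisson_QP2_r (f : phase -> R) b (X Y : coords) :
  poisson Gam f (QP2 b) (X, Y) =
  2 * (Pc Gam b (X, Y) * \sum_(j < N) dX f (X, Y) j b -
       Qc Gam b (X, Y) * \sum_(j < N) dY f (X, Y) j b).
Proof.
rewrite !mulr_sumr -sumrB mulr_sumr /poisson; apply: eq_bigr => j _.
under eq_bigr do rewrite dX_QP2 dY_QP2.
rewrite (eq_bigr (fun c => 2 * Gam j * (Pc Gam b (X, Y) * dX f (X, Y) j c -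
  Qc Gam b (X, Y) * dY f (X, Y) j c) * (b == c)%:R)); last by move=> c _; ring.
by rewrite sumr_deltaC; field; exact: Gam_neq0.
Qed.

Lemma poisson_Fpl_Fpl a b (p : phase) : poisson Gam (Fpl Gam a) (Fpl Gam b) p = 0.
Proof.
case: p => X Y; rewrite poisson_Fpl_r big1 ?mulr0 // => j _.
by rewrite dX_Fpl dY_Fpl; ring.
Qed.

Lemma poisson_QP2_QP2 a b (p : phase) : poisson Gam (QP2 a) (QP2 b) p = 0.
Proof.
case: p => X Y; rewrite poisson_QP2_r.
under eq_bigr do rewrite dX_QP2.
under [X in _ - _ * X]eq_bigr do rewrite dY_QP2.
rewrite -!mulr_suml -!mulr_sumr; case: eqP => [->|_] /=; ring.
Qed.

Lemma poisson_QP2_Fpl a b (p : phase) : poisson Gam (QP2 a) (Fpl Gam b) p = 0.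
Proof.
case: p => X Y; rewrite poisson_Fpl_r.
under eq_bigr do rewrite dX_QP2 dY_QP2.
have [<-|_] := eqVneq a b; last by rewrite big1 ?mulr0 // => j _ /=; ring.
rewrite (eq_bigr (fun j => 2 * Qc Gam a (X, Y) * (Gam j * Y j a) -
  2 * Pc Gam a (X, Y) * (Gam j * X j a))); last by move=> j _ /=; ring.
by rewrite sumrB -!mulr_sumr /Pc /Qc /=; ring.
Qed.

Section Hamiltonian.
Variables (K : R) (phi phi' : R -> R).
Hypothesis phi_derive : forall x : R, 0 < x -> is_derive x 1 phi (phi' x).
Variables (X Y : coords).
Hypothesis nc : no_collision (X, Y).

Lemma dX_pair_potential i a : dX (pair_potential Gam K phi) (X, Y) i a =
  pair_grad K (pair_weight Gam phi' X Y) (fun j => X j a) i.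
Proof. exact/dX_is_derive/is_derive_pair_potential. Qed.

Lemma dY_pair_potential i a : dY (pair_potential Gam K phi) (X, Y) i a =
  pair_grad K (pair_weight Gam phi' X Y) (fun j => Y j a) i.
Proof.
rewrite dY_swap_invariant; last exact: pair_potential_swap.
rewrite -(pair_weight_swap _ _ X).
exact/dX_is_derive/is_derive_pair_potential/(no_collision_swap nc).
Qed.

Lemma poisson_pair_potential_Fpl b :
  poisson Gam (pair_potential Gam K phi) (Fpl Gam b) (X, Y) = 0.
Proof.
rewrite poisson_Fpl_r.
under eq_bigr do rewrite dX_pair_potential dY_pair_potential.
by rewrite pair_grad_rot mulr0.
Qed.

Lemma poisson_pair_potential_QP2 b :
  poisson Gam (pair_potential Gam K phi) (QP2 b) (X, Y) = 0.
Proof.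
rewrite poisson_QP2_r.
under eq_bigr do rewrite dX_pair_potential.
under [X in _ - _ * X]eq_bigr do rewrite dY_pair_potential.
by rewrite !pair_grad_sum !mulr0 subrr mulr0.
Qed.

End Hamiltonian.

End FirstIntegrals.

Lemma Ham_pair_potential (R : realType) (N m : nat) (Gam : 'I_N -> R) :
  exists (K : R) (phi phi' : R -> R),
    (forall x : R, 0 < x -> is_derive x 1 phi (phi' x)) /\
    Ham Gam = pair_potential (m := m) Gam K phi.
Proof.
rewrite /Ham; case: (m == 1)%N.
  exists (- (4 * pi)^-1), (@ln R), (fun x => x^-1).
  by split; first exact: is_derive1_ln.
exists (2 * C2m R m), (fun x => x ^- (m - 1)),
  (fun x => - (x ^+ (m - 1)) ^- 2 * ((m - 1)%:R * x ^+ (m - 1).-1 * 1)).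
split=> // x x_gt0; apply: is_derive1V; first by rewrite expf_neq0 // gt_eqF.
exact: (is_derive1X _ (f := id) (is_derive_id x 1)).
Qed.

Theorem corollary4p4 (R : realType) (N m : nat) (Gam : 'I_N -> R) :
  (0 < m)%N ->
  (forall j, Gam j != 0) ->
  #|{: option ('I_m + 'I_m)}| = (2 * m + 1)%N /\
  forall p : phase R N m, no_collision p ->
    (forall i, has_partials (integrals Gam i) p) /\
    (forall i i', poisson Gam (integrals Gam i) (integrals Gam i') p = 0).
Proof.
move=> _ Gam_neq0; split.
  by rewrite card_option card_sum card_ord addn1 mul2n addnn.
case=> X Y nc.
have [K [phi [phi' [phi_derive HamE]]]] := Ham_pair_potential m Gam.
have integralsE (i : option ('I_m + 'I_m)) : integrals Gam i = match i with
    | None => pair_potential Gam K phi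
    | Some (inl a) => Fpl Gam a
    | Some (inr a) => QP2 Gam a end.
  by case: i => [[a|a]|] //; exact: HamE.
have PF := poisson_pair_potential_Fpl Gam_neq0 K phi_derive nc.
have PQ := poisson_pair_potential_QP2 Gam_neq0 K phi_derive nc.
split=> [i|i i']; case: i => [[b|b]|]; rewrite ?integralsE /=.
- apply: has_partials_swap_invariant (Fpl_swap Gam b) _ _ => i a;
    exact: is_derive_Fpl.
- apply: has_partials_swap_invariant (QP2_swap Gam b) _ _ => i a;
    exact: is_derive_QP2.
- apply: has_partials_swap_invariant (pair_potential_swap Gam K phi) _ _ => i a.
    exact: is_derive_pair_potential.
  exact/is_derive_pair_potential/(no_collision_swap nc).
all: case: i' => [[a|a]|] /=;
  rewrite ?poissonxx ?(poisson_Fpl_Fpl Gam_neq0) ?(poisson_QP2_QP2 Gam_neq0)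
          ?(poisson_QP2_Fpl Gam_neq0) ?PF ?PQ //;
  by rewrite poissonC ?(poisson_QP2_Fpl Gam_neq0) ?PF ?PQ oppr0.
Qed.
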